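(* Let $\mathsf{op}_0\mathsf{op}_1\cdots\mathsf{op}_n$ be a nonempty sequence over the alphabet $\{\uparrow_1,\uparrow_2,\downarrow_1,\downarrow_2,\Downarrow\}$ which is valid, i.e. applying the operations successively to the empty order-2 stack $[[\,]]$ is defined at every step. Let $L_1$ and $L_2$ be the languages generated by the nonterminals $S_1$ and $S_2$ of the context-free grammar $$S_1 \to \uparrow_1 \mid S_1\uparrow_2 \mid S_1S_1\downarrow_1 \mid S_1S_2\downarrow_2 \mid S_1S_2S_1\Downarrow,\qquad S_2\to \uparrow_2 \mid S_2\uparrow_1 \mid S_2\downarrow_1 \mid S_2S_2\downarrow_2 \mid S_2S_2S_1\Downarrow .$$ Then for all $0\le i\le j\le n$: (P1) $\mathsf{push}_1(j)=i$ iff $\mathsf{op}_i\cdots\mathsf{op}_j\in L_1$; (P2) $\mathsf{Push}_2(j)=i$ iff $\mathsf{op}_i\cdots\mathsf{op}_j\in L_2$; (P3) $\mathsf{push}_1(j)=-1$ iff $\mathsf{op}_k\cdots\mathsf{op}_j\notin L_1$ for all $0\le k\le j$; (P4) $\mathsf{Push}_2(j)=-1$ iff $\mathsf{op}_k\cdots\mathsf{op}_j\notin L_2$ for all $0\le k\le j$.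
   Context: Order-2 collapsible stacks over a finite set $S$ of stack symbols: an order-2 stack is $W=[[u_1][u_2]\cdots[u_n]]$ ($n\ge1$) where each $u_i$ is a word over $S\times\{0,1,\dots,i-1\}$ (the second component is a collapse link to the index of a stack below). The empty order-2 stack is $[[\,]]$ (one empty order-1 stack). Operations: $\uparrow_2$ (order-2 push) duplicates the topmost stack: $[[u_1]\cdots[u_n]]\mapsto[[u_1]\cdots[u_n][u_n]]$; $\downarrow_2$ (order-2 pop) removes the topmost stack, undefined if $n=1$; $\uparrow_1$ (order-1 push of some symbol $s$, the symbol being irrelevant here) maps $[[u_1]\cdots[u_n]]$ to $[[u_1]\cdots[u_n(s,n-1)]]$; $\downarrow_1$ (order-1 pop) removes the last letter of $u_n$, undefined if $u_n$ is empty; $\Downarrow$ (collapse): if $u_n=u_n'(s,i)$ then $[[u_1]\cdots[u_n]]\mapsto[[u_1]\cdots[u_i]]$ (undefined if $u_n$ empty or $i=0$). For a valid sequence and $0\le j\le n$, $\mathsf{push}_1(j)$ is the position $i$ of the $\uparrow_1$ operation that pushed the top symbol of the top order-1 stack present after executing $\mathsf{op}_j$, and $\mathsf{push}_1(j)=-1$ if that top order-1 stack is empty; $\mathsf{Push}_2(j)$ is the position of the $\uparrow_2$ operation that pushed (duplicated) the top order-1 stack present after executing $\mathsf{op}_j$, and $\mathsf{Push}_2(j)=-1$ if the order-2 stack then contains only one order-1 stack. *)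

From mathcomp Require Import all_boot all_algebra.
Set Implicit Arguments. Unset Strict Implicit. Unset Printing Implicit Defensive.

(* Order-2 collapsible stacks, with the (irrelevant) stack symbol dropped.
   An order-1 stack is a list of letters (link, origin), HEAD = TOP, where
   link = collapse link (index of a stack below, 1-based as in the paper)
   and origin = position of the up_1 operation that pushed that letter
   (copies made by up_2 keep the origin of the original letter).
   An order-2 stack is a list of (tag, order-1 stack), HEAD = TOP, where
   tag = Some i if that order-1 stack was created by the up_2 at position i,
   and None for the bottom (initial) order-1 stack. *)

Inductive Op := Up1 | Up2 | Down1 | Down2 | Collapse.

Definition stk1 := seq (nat * nat).
Definition stk2 := seq (option nat * stk1).

Definition empty2 : stk2 := [:: (None, [::])].

Definition step (p : nat) (o : Op) (W : stk2) : option stk2 :=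
  match W with
  | [::] => None
  | (t, u) :: rest =>
    match o with
    | Up1 => Some ((t, ((size W).-1, p) :: u) :: rest)
    | Up2 => Some ((Some p, u) :: (t, u) :: rest)
    | Down1 => if u is _ :: u' then Some ((t, u') :: rest) else None
    | Down2 => if rest is [::] then None else Some rest
    | Collapse =>
        match u with
        | [::] => None
        | (i, _) :: _ => if i == 0 then None else Some (drop (size W - i) W)
        end
    end
  end.

Fixpoint run_from (p : nat) (W : stk2) (ops : seq Op) : option stk2 :=
  match ops with
  | [::] => Some W
  | o :: os => match step p o W with
               | None => None
               | Some W' => run_from p.+1 W' os
               end
  end.

Definition run (ops : seq Op) : option stk2 := run_from 0 empty2 ops.

(* valid: every step is defined (run fails permanently once undefined) *)
Definition valid (ops : seq Op) : Prop := run ops <> None.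

Definition push1 (ops : seq Op) (j : nat) : int :=
  match run (take j.+1 ops) with
  | Some ((_, (_, p) :: _) :: _) => Posz p
  | _ => (-1)%R
  end.

Definition Push2 (ops : seq Op) (j : nat) : int :=
  match run (take j.+1 ops) with
  | Some W => if size W == 1 then (-1)%R else
              match W with
              | (Some p, _) :: _ => Posz p
              | _ => (-1)%R
              end
  | None => (-1)%R
  end.

Inductive L1 : seq Op -> Prop :=
| L1_up1 : L1 [:: Up1]
| L1_up2 w : L1 w -> L1 (w ++ [:: Up2])
| L1_down1 w1 w2 : L1 w1 -> L1 w2 -> L1 (w1 ++ w2 ++ [:: Down1])
| L1_down2 w1 w2 : L1 w1 -> L2 w2 -> L1 (w1 ++ w2 ++ [:: Down2])
| L1_col w1 w2 w3 : L1 w1 -> L2 w2 -> L1 w3 -> L1 (w1 ++ w2 ++ w3 ++ [:: Collapse])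
with L2 : seq Op -> Prop :=
| L2_up2 : L2 [:: Up2]
| L2_up1 w : L2 w -> L2 (w ++ [:: Up1])
| L2_down1 w : L2 w -> L2 (w ++ [:: Down1])
| L2_down2 w1 w2 : L2 w1 -> L2 w2 -> L2 (w1 ++ w2 ++ [:: Down2])
| L2_col w1 w2 w3 : L2 w1 -> L2 w2 -> L1 w3 -> L2 (w1 ++ w2 ++ w3 ++ [:: Collapse]).

Definition factor (ops : seq Op) (i j : nat) : seq Op :=
  take (j - i).+1 (drop i ops).

From mathcomp Require Import all_boot all_algebra.
From mathcomp Require Import zify.
Set Implicit Arguments. Unset Strict Implicit. Unset Printing Implicit Defensive.

(* Running a word of L1 from position p pushes, in net effect, one letter
   with origin p onto the current top order-1 stack (possibly below new
   order-1 stacks, leaving the order-1 stacks underneath untouched); running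
   a word of L2 from p pushes one new order-1 stack tagged p.  This gives the
   "if" directions of (P1) and (P2).  Conversely, by strong induction on j,
   the factor from push_1(j) (resp. Push_2(j)) to j splits according to the
   grammar rule for op_j: a pop or a collapse returns to a stack that was
   current at an earlier position, whose push values are explained by the
   induction hypothesis.  (P3) and (P4) follow, since push values are either
   -1 or positions. *)

Lemma run_from_cat p W a b : run_from p W (a ++ b) =
  if run_from p W a is Some W' then run_from (p + size a) W' b else None.
Proof.
elim: a p W => [|o a IH] p W /=; first by rewrite addn0.
by case: (step p o W) => // W1; rewrite IH addSnnS.
Qed.

Lemma run_from_cat_Some p W a b W' : run_from p W (a ++ b) = Some W' ->
  exists2 W1, run_from p W a = Some W1 & run_from (p + size a) W1 b = Some W'.
Proof. by rewrite run_from_cat; case: run_from => // W1; exists W1. Qed.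

Lemma run_from1 p W o : run_from p W [:: o] = step p o W.
Proof. by rewrite /=; case: step. Qed.

Lemma step_collapse k t m v (Y W : stk2) : W <> [::] ->
  step k Collapse ((t, (size W, m) :: v) :: Y ++ W) = Some W.
Proof.
case: W => // x W _ /=.
have -> : (size (Y ++ x :: W)).+1 - (size W).+1 = (size Y).+1.
  by rewrite size_cat /=; lia.
by rewrite /= drop_size_cat.
Qed.

Scheme L1_mind := Induction for L1 Sort Prop
  with L2_mind := Induction for L2 Sort Prop.
Combined Scheme L1_L2_mind from L1_mind, L2_mind.

Lemma run_L1_L2 :
  (forall w, L1 w -> forall p t u rest W,
     run_from p ((t, u) :: rest) w = Some W ->
     exists t' Y, W = (t', (size rest, p) :: u) :: Y ++ rest) /\
  (forall w, L2 w -> forall p V W, run_from p V w = Some W ->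
     exists v, W = (Some p, v) :: V).
Proof.
apply: L1_L2_mind.
- by move=> p t u rest W /= [<-]; exists t, [::].
- move=> w _ IH p t u rest W /run_from_cat_Some [W1 /IH [t' [Y ->]]].
  rewrite run_from1 /= => -[<-].
  by exists (Some (p + size w)), ((t', (size rest, p) :: u) :: Y).
- move=> w1 w2 _ IH1 _ IH2 p t u rest W /run_from_cat_Some [W1 /IH1 [t1 [Y1 ->]]].
  move=> /run_from_cat_Some [W2 /IH2 [t2 [Y2 ->]]].
  by rewrite run_from1 /= => -[<-]; exists t2, (Y2 ++ Y1); rewrite catA.
- move=> w1 w2 _ IH1 _ IH2 p t u rest W /run_from_cat_Some [W1 /IH1 [t1 [Y1 ->]]].
  move=> /run_from_cat_Some [W2 /IH2 [v ->]].
  by rewrite run_from1 /= => -[<-]; exists t1, Y1.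
- move=> w1 w2 w3 _ IH1 _ IH2 _ IH3 p t u rest W.
  move=> /run_from_cat_Some [W1 /IH1 [t1 [Y1 ->]]].
  move=> /run_from_cat_Some [W2 /IH2 [v ->]].
  move=> /run_from_cat_Some [W3 /IH3 [t3 [Y3 ->]]].
  by rewrite run_from1 step_collapse // => -[<-]; exists t1, Y1.
- by move=> p [|[t u] V] W //= [<-]; exists u.
- move=> w _ IH p V W /run_from_cat_Some [W1 /IH [v ->]].
  by rewrite run_from1 /= => -[<-]; eexists.
- move=> w _ IH p V W /run_from_cat_Some [W1 /IH [[|x v] ->]] //.
  by rewrite run_from1 /= => -[<-]; eexists.
- move=> w1 w2 _ IH1 _ IH2 p V W /run_from_cat_Some [W1 /IH1 [v ->]].
  move=> /run_from_cat_Some [W2 /IH2 [v2 ->]].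
  by rewrite run_from1 /= => -[<-]; eexists.
- move=> w1 w2 w3 _ IH1 _ IH2 _ IH3 p V W /run_from_cat_Some [W1 /IH1 [v ->]].
  move=> /run_from_cat_Some [W2 /IH2 [v2 ->]].
  move=> /run_from_cat_Some [W3 /IH3 [t3 [Y3 ->]]].
  by rewrite run_from1 step_collapse // => -[<-]; exists v.
Qed.

Definition well_tagged (W : stk2) : Prop :=
  W <> [::] /\ forall k, k.+1 < size W -> (nth (None, [::]) W k).1 <> None.

Lemma well_tagged_cons W : well_tagged W -> exists t u rest, W = (t, u) :: rest.
Proof. by case: W => [[]//|[t u] rest]; exists t, u, rest. Qed.

Lemma well_tagged_top W : well_tagged W -> 1 < size W ->
  exists q u rest, W = (Some q, u) :: rest.
Proof.
case=> _ tagged Hs; move: (tagged 0 Hs).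
by case: W {tagged} Hs => // -[[q|] u] rest //= _ _; exists q, u, rest.
Qed.

Lemma step_well_tagged p o W W' : well_tagged W -> step p o W = Some W' ->
  well_tagged W'.
Proof.
case: W => [[]//|[t u] rest] [_ tagged].
have head_tagged u' : well_tagged ((t, u') :: rest).
  by split=> // -[|k] Hk; [exact: (tagged 0) | exact: (tagged k.+1)].
case: o => /=.
- by move=> [<-]; exact: head_tagged.
- by move=> [<-]; split=> // -[|k] //= Hk; exact: tagged.
- by case: u {tagged} => // l u' [<-]; exact: head_tagged.
- by case: rest tagged {head_tagged} => // x rest tagged [<-]; split=> // k Hk; exact: (tagged k.+1).
- case: u tagged {head_tagged} => // -[i m] u tagged; case: eqP => // Hi [<-]; split.
    by move/(congr1 size); rewrite size_drop /=; lia.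
  by move=> k; rewrite size_drop nth_drop => Hk; apply: tagged; lia.
Qed.

Lemma run_from_well_tagged p W w W' : well_tagged W ->
  run_from p W w = Some W' -> well_tagged W'.
Proof.
elim: w p W => [|o w IH] p W /= HW; first by move=> [<-].
by case E: step => [W1|] // /IH; apply; exact: step_well_tagged E.
Qed.

Definition state (ops : seq Op) (i : nat) : option stk2 := run (take i ops).

Definition segment (ops : seq Op) (p q : nat) : seq Op := drop p (take q ops).

Lemma state_well_tagged ops i W : state ops i = Some W -> well_tagged W.
Proof. by apply: run_from_well_tagged; split=> // -[|k]. Qed.

Lemma state_exists ops i : valid ops -> i <= size ops ->
  exists W, state ops i = Some W.
Proof.
rewrite /valid /state /run -{1}(cat_take_drop i ops) run_from_cat.
by case: run_from => [W|] // _ _; exists W.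
Qed.

Lemma take_segment ops r q : r <= q -> take q ops = take r ops ++ segment ops r q.
Proof. by move=> Hrq; rewrite /segment -{1}(cat_take_drop r (take q ops)) take_takel. Qed.

Lemma state_segment ops r q W : r <= q -> q <= size ops -> state ops r = Some W ->
  state ops q = run_from r W (segment ops r q).
Proof.
move=> Hrq Hq; rewrite /state /run (take_segment ops Hrq) run_from_cat => ->.
by rewrite size_takel //; lia.
Qed.

Lemma segment_cat ops p r q : p <= r -> r <= q -> q <= size ops ->
  segment ops p q = segment ops p r ++ segment ops r q.
Proof.
move=> Hpr Hrq Hq; rewrite {1}/segment (take_segment ops Hrq) drop_cat size_takel; last lia.
case: ltnP => Hp; first by [].
have -> : p = r by lia.
by rewrite subnn drop0 {2}/segment drop_oversize // size_takel //; lia.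
Qed.

Lemma segment1 ops j : j < size ops -> segment ops j j.+1 = [:: nth Up1 ops j].
Proof.
move=> Hj; rewrite /segment (take_nth Up1 Hj) -cats1 drop_size_cat //.
by rewrite size_takel //; lia.
Qed.

Lemma segment_snoc ops p j : p <= j -> j < size ops ->
  segment ops p j.+1 = segment ops p j ++ [:: nth Up1 ops j].
Proof. by move=> Hp Hj; rewrite (segment_cat Hp (leqnSn j) Hj) segment1. Qed.

Lemma factor_segment ops i j : i <= j -> factor ops i j = segment ops i j.+1.
Proof. by move=> H; rewrite /factor take_drop /segment; congr (drop _ (take _ _)); lia. Qed.

Lemma state_L1 ops r m W : valid ops -> r <= m -> m <= size ops ->
  state ops m = Some W -> L1 (segment ops r m) ->
  exists t u rest, state ops r = Some ((t, u) :: rest) /\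
    exists t' Y, W = (t', (size rest, r) :: u) :: Y ++ rest.
Proof.
move=> Hv Hrm Hm Em HL.
have [Wr Er] := state_exists Hv (leq_trans Hrm Hm).
have [t [u [rest EWr]]] := well_tagged_cons (state_well_tagged Er); subst Wr.
exists t, u, rest; split=> //.
by apply: (proj1 run_L1_L2 _ HL r t u rest W); rewrite -(state_segment Hrm Hm Er).
Qed.

Lemma state_L2 ops q m W : valid ops -> q <= m -> m <= size ops ->
  state ops m = Some W -> L2 (segment ops q m) ->
  exists Wq v, state ops q = Some Wq /\ W = (Some q, v) :: Wq.
Proof.
move=> Hv Hqm Hm Em HL.
have [Wq Eq] := state_exists Hv (leq_trans Hqm Hm).
have [v EW] : exists v, W = (Some q, v) :: Wq.
  by apply: (proj2 run_L1_L2 _ HL q); rewrite -(state_segment Hqm Hm Eq).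
by exists Wq, v.
Qed.

Definition push1_of (W : stk2) : int :=
  match W with (_, (_, p) :: _) :: _ => Posz p | _ => (-1)%R end.

Definition Push2_of (W : stk2) : int :=
  if size W == 1 then (-1)%R else
  match W with (Some p, _) :: _ => Posz p | _ => (-1)%R end.

Lemma push1E ops j : push1 ops j = oapp push1_of (-1)%R (state ops j.+1).
Proof. by rewrite /push1 /state; case: run => [[|[t [|[a p] u]] W]|]. Qed.

Lemma Push2E ops j : Push2 ops j = oapp Push2_of (-1)%R (state ops j.+1).
Proof. by rewrite /Push2 /state; case: run. Qed.

Lemma push1_cases ops j : push1 ops j = (-1)%R \/ exists p, push1 ops j = Posz p.
Proof. by rewrite /push1; case: run => [[|[t [|[a p] u]] W]|]; [left|left|right; exists p|left]. Qed.

Lemma Push2_cases ops j : Push2 ops j = (-1)%R \/ exists p, Push2 ops j = Posz p.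
Proof.
rewrite /Push2; case: run => [W|]; last by left.
by case: ifP => _; [left | case: W => [|[[p|] u] W]; [left | right; exists p | left]].
Qed.

Lemma Push2_of_tagged q u (W : stk2) : W <> [::] -> Push2_of ((Some q, u) :: W) = Posz q.
Proof. by case: W. Qed.

Definition derivable (top : stk2 -> int) (L : seq Op -> Prop) ops i W : Prop :=
  forall p, top W = Posz p -> p < i /\ L (segment ops p i).

Lemma derivable_last top (L : seq Op -> Prop) ops j W :
  j < size ops -> top W = Posz j -> L [:: nth Up1 ops j] -> derivable top L ops j.+1 W.
Proof. by move=> Hj HW HL p; rewrite HW => -[<-]; rewrite segment1. Qed.

Lemma derivable_extend top (L : seq Op -> Prop) ops q i Wq W :
  q <= i -> i <= size ops -> top W = top Wq ->
  (forall x, L x -> L (x ++ segment ops q i)) ->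
  derivable top L ops q Wq -> derivable top L ops i W.
Proof.
move=> Hqi Hi Etop HL Hq p; rewrite Etop => /Hq [Hpq Hp]; split; first lia.
by rewrite (segment_cat (ltnW Hpq) Hqi Hi); exact: HL.
Qed.

Definition explained ops i W : Prop :=
  derivable push1_of L1 ops i W /\ derivable Push2_of L2 ops i W.

Section CompletenessStep.

Variables (ops : seq Op) (j : nat) (Wj W : stk2).
Hypothesis valid_ops : valid ops.
Hypothesis lt_j_size : j < size ops.
Hypothesis IH : forall m V, m <= j -> state ops m = Some V -> explained ops m V.
Hypothesis state_j : state ops j = Some Wj.

Let le_j_size : j <= size ops. Proof. exact: ltnW. Qed.

Lemma explained_up1 : nth Up1 ops j = Up1 -> step j Up1 Wj = Some W ->
  explained ops j.+1 W.
Proof.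
case: Wj state_j => [//|[t u] rest] Ej Eo [<-]; split.
  by apply: derivable_last => //; rewrite Eo; exact: L1_up1.
apply: derivable_extend (leqnSn j) _ _ _ (IH (leqnn j) Ej).2 => // x Hx.
by rewrite segment1 // Eo; exact: L2_up1.
Qed.

Lemma explained_up2 : nth Up1 ops j = Up2 -> step j Up2 Wj = Some W ->
  explained ops j.+1 W.
Proof.
case: Wj state_j => [//|[t u] rest] Ej Eo [<-]; split; last first.
  by apply: derivable_last => //; rewrite Eo; exact: L2_up2.
apply: derivable_extend (leqnSn j) _ _ _ (IH (leqnn j) Ej).1 => // x Hx.
by rewrite segment1 // Eo; exact: L1_up2.
Qed.

Lemma explained_down1 : nth Up1 ops j = Down1 -> step j Down1 Wj = Some W ->
  explained ops j.+1 W.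
Proof.
case: Wj state_j => [//|[t [//|[b r] u]] rest] Ej Eo [<-].
have [ltrj HLr] := (IH (leqnn j) Ej).1 r erefl.
have [tr [ur [restr [Er [t' [Y EWj]]]]]] := state_L1 valid_ops (ltnW ltrj) le_j_size Ej HLr.
case: EWj => _ _ -> _; have le_r_jS : r <= j.+1 by lia.
split.
  apply: derivable_extend le_r_jS _ _ _ (IH (ltnW ltrj) Er).1 => // x Hx.
  by rewrite segment_snoc ?(ltnW ltrj) // Eo; exact: L1_down1.
apply: derivable_extend (leqnSn j) _ _ _ (IH (leqnn j) Ej).2 => // x Hx.
by rewrite segment1 // Eo; exact: L2_down1.
Qed.

Lemma explained_down2 : nth Up1 ops j = Down2 -> step j Down2 Wj = Some W ->
  explained ops j.+1 W.
Proof.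
case: Wj state_j => [//|[t u] [//|x rest]] Ej Eo [<-].
have [q [_ [_ [Et _ _]]]] := well_tagged_top (state_well_tagged Ej) erefl.
subst t; have [ltqj HLq] := (IH (leqnn j) Ej).2 q erefl.
have [Wq [_ [Eq [_ EWq]]]] := state_L2 valid_ops (ltnW ltqj) le_j_size Ej HLq.
subst Wq; have le_q_jS : q <= j.+1 by lia.
have Hseg : segment ops q j.+1 = segment ops q j ++ [:: Down2].
  by rewrite segment_snoc ?(ltnW ltqj) // Eo.
split.
- apply: derivable_extend le_q_jS _ _ _ (IH (ltnW ltqj) Eq).1 => // y Hy.
  by rewrite Hseg; exact: L1_down2.
- apply: derivable_extend le_q_jS _ _ _ (IH (ltnW ltqj) Eq).2 => // y Hy.
  by rewrite Hseg; exact: L2_down2.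
Qed.

Lemma explained_collapse : nth Up1 ops j = Collapse -> step j Collapse Wj = Some W ->
  explained ops j.+1 W.
Proof.
case: Wj state_j => [//|[t [//|[a r] u]] rest] Ej Eo Hstep.
have [ltrj HLr] := (IH (leqnn j) Ej).1 r erefl.
have [tr [ur [restr [Er [t' [Y EWj]]]]]] := state_L1 valid_ops (ltnW ltrj) le_j_size Ej HLr.
case: EWj Hstep => -> -> -> -> Hstep.
have restr_neq_nil : restr <> [::] by move=> E; move: Hstep; rewrite E.
move: Hstep; rewrite step_collapse // => -[<-].
(* The collapse link of the letter pushed at r points just below the order-1
   stack that was on top at r, so collapsing returns to the stack current
   at the position q of the up_2 that created that order-1 stack. *)
have [q [_ [_ [Etr _ _]]]] : exists q v W0, (tr, ur) :: restr = (Some q, v) :: W0.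
  by apply: well_tagged_top (state_well_tagged Er) _; case: (restr) restr_neq_nil.
subst tr; have [ltqr HLq] := (IH (ltnW ltrj) Er).2 q (Push2_of_tagged _ _ restr_neq_nil).
have le_r_size := leq_trans (ltnW ltrj) le_j_size.
have [Wq [_ [Eq [_ EWq]]]] := state_L2 valid_ops (ltnW ltqr) le_r_size Er HLq.
subst Wq; have ltqj := ltn_trans ltqr ltrj; have le_q_jS : q <= j.+1 by lia.
have Hseg : segment ops q j.+1 =
    segment ops q r ++ segment ops r j ++ [:: Collapse].
  rewrite segment_snoc ?(ltnW ltqj) // Eo.
  by rewrite (segment_cat (ltnW ltqr) (ltnW ltrj) le_j_size) catA.
split.
- apply: derivable_extend le_q_jS _ _ _ (IH (ltnW ltqj) Eq).1 => // y Hy.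
  by rewrite Hseg; exact: L1_col.
- apply: derivable_extend le_q_jS _ _ _ (IH (ltnW ltqj) Eq).2 => // y Hy.
  by rewrite Hseg; exact: L2_col.
Qed.

End CompletenessStep.

Lemma state_explained ops i W : valid ops -> i <= size ops ->
  state ops i = Some W -> explained ops i W.
Proof.
move=> Hv; elim/ltn_ind: i W => -[|j] IH W Hi.
  by rewrite /state take0 => -[<-].
have IHj m V : m <= j -> state ops m = Some V -> explained ops m V.
  by move=> Hm; apply: IH => //; lia.
have [Wj Ej] := state_exists Hv (ltnW Hi).
rewrite (state_segment (leqnSn j) Hi Ej) segment1 // run_from1.
case Eo: (nth Up1 ops j).
- exact: explained_up1.
- exact: explained_up2.
- exact: explained_down1.
- exact: explained_down2.
- exact: explained_collapse.
Qed.

Lemma push1_complete ops j p : valid ops -> j < size ops ->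
  push1 ops j = Posz p -> p <= j /\ L1 (factor ops p j).
Proof.
move=> Hv Hj; have [W EW] := state_exists Hv Hj.
rewrite push1E EW => /((state_explained Hv Hj EW).1) [Hp HL].
by rewrite factor_segment.
Qed.

Lemma Push2_complete ops j p : valid ops -> j < size ops ->
  Push2 ops j = Posz p -> p <= j /\ L2 (factor ops p j).
Proof.
move=> Hv Hj; have [W EW] := state_exists Hv Hj.
rewrite Push2E EW => /((state_explained Hv Hj EW).2) [Hp HL].
by rewrite factor_segment.
Qed.

Lemma push1_sound ops i j : valid ops -> i <= j -> j < size ops ->
  L1 (factor ops i j) -> push1 ops j = Posz i.
Proof.
move=> Hv Hij Hj; rewrite factor_segment // => HL.
have [W EW] := state_exists Hv Hj.
have [t [u [rest [_ [t' [Y EW']]]]]] := state_L1 Hv (leqW Hij) Hj EW HL.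
by rewrite push1E EW EW'.
Qed.

Lemma Push2_sound ops i j : valid ops -> i <= j -> j < size ops ->
  L2 (factor ops i j) -> Push2 ops j = Posz i.
Proof.
move=> Hv Hij Hj; rewrite factor_segment // => HL.
have [W EW] := state_exists Hv Hj.
have [Wi [v [Ei EW']]] := state_L2 Hv (leqW Hij) Hj EW HL.
by rewrite Push2E EW EW' /= Push2_of_tagged //; case: (state_well_tagged Ei).
Qed.

Unset Implicit Arguments. Set Strict Implicit.

Theorem proposition1 (ops : seq Op) :
  0 < size ops -> valid ops ->
  forall i j : nat, i <= j -> j < size ops ->
    (push1 ops j = Posz i <-> L1 (factor ops i j)) /\
    (Push2 ops j = Posz i <-> L2 (factor ops i j)) /\
    (push1 ops j = (-1)%R <-> (forall k, k <= j -> ~ L1 (factor ops k j))) /\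
    (Push2 ops j = (-1)%R <-> (forall k, k <= j -> ~ L2 (factor ops k j))).
Proof.
move=> _ Hv i j Hij Hj; split; [|split; [|split]].
- by split; [move=> /(push1_complete Hv Hj) [] | exact: push1_sound].
- by split; [move=> /(Push2_complete Hv Hj) [] | exact: Push2_sound].
- split; first by move=> H k Hk /(push1_sound Hv Hk Hj); rewrite H.
  move=> H; case: (push1_cases ops j) => // -[p /(push1_complete Hv Hj) [Hpj HL]].
  by case: (H p Hpj HL).
- split; first by move=> H k Hk /(Push2_sound Hv Hk Hj); rewrite H.
  move=> H; case: (Push2_cases ops j) => // -[p /(Push2_complete Hv Hj) [Hpj HL]].
  by case: (H p Hpj HL).
Qed.
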